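(* In the setting below, if $\bar A$ is a global minimizer of $\min_{A\in\mathbb{R}^{n\times m}}\sum_{t=0}^{T-1}\|(\bar A-A)f(x_t)+\bar d_t\|_2$, then $$\Big\|\sum_{t\in\mathcal K} f(x_t)\hat d_t^\top\Big\|_F\le \sum_{t\in\mathcal K^c}\|f(x_t)\|_2 .$$ Moreover, when $m=1$, this condition is also sufficient for $\bar A$ to be a global minimizer.
   Context: $f:\mathbb{R}^n\to\mathbb{R}^m$ is given, $\bar A\in\mathbb{R}^{n\times m}$, $\bar d_0,\dots,\bar d_{T-1}\in\mathbb{R}^n$, and $x_0=0_n$, $x_{t+1}=\bar A f(x_t)+\bar d_t$ for $t=0,\dots,T-1$. $\mathcal K:=\{t\in\{0,\dots,T-1\}:\bar d_t\ne 0\}$, $\mathcal K^c:=\{0,\dots,T-1\}\setminus\mathcal K$, $\hat d_t:=\bar d_t/\|\bar d_t\|_2$ for $t\in\mathcal K$; $\|\cdot\|_F$ is the Frobenius norm. *)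

From mathcomp Require Import all_boot all_order all_algebra.
From mathcomp Require Import reals.
Set Implicit Arguments. Unset Strict Implicit. Unset Printing Implicit Defensive.
Import Order.TTheory GRing.Theory Num.Theory.
Local Open Scope ring_scope.

Definition norm2 {R : realType} {k : nat} (v : 'cV[R]_k) : R :=
  Num.sqrt (\sum_(i < k) v i 0 ^+ 2).

Definition frob {R : realType} {p q : nat} (M : 'M[R]_(p, q)) : R :=
  Num.sqrt (\sum_(i < p) \sum_(j < q) M i j ^+ 2).

Fixpoint traj {R : realType} {n m : nat} (f : 'cV[R]_n -> 'cV[R]_m)
  (Abar : 'M[R]_(n, m)) (d : nat -> 'cV[R]_n) (t : nat) : 'cV[R]_n :=
  match t with
  | O => 0
  | S s => Abar *m f (traj f Abar d s) + d s
  end.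

Definition objective {R : realType} {n m : nat} (T : nat)
  (f : 'cV[R]_n -> 'cV[R]_m) (Abar : 'M[R]_(n, m)) (d : nat -> 'cV[R]_n)
  (A : 'M[R]_(n, m)) : R :=
  \sum_(t < T) norm2 ((Abar - A) *m f (traj f Abar d t) + d t).

Definition is_global_minimizer {R : realType} {n m : nat} (T : nat)
  (f : 'cV[R]_n -> 'cV[R]_m) (Abar : 'M[R]_(n, m)) (d : nat -> 'cV[R]_n) : Prop :=
  forall A : 'M[R]_(n, m), objective T f Abar d Abar <= objective T f Abar d A.

Definition opt_condition {R : realType} {n m : nat} (T : nat)
  (f : 'cV[R]_n -> 'cV[R]_m) (Abar : 'M[R]_(n, m)) (d : nat -> 'cV[R]_n) : Prop :=
  frob (\sum_(t < T | d t != 0)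
          f (traj f Abar d t) *m ((norm2 (d t))^-1 *: d t)^T)
  <= \sum_(t < T | d t == 0) norm2 (f (traj f Abar d t)).

From mathcomp Require Import all_boot all_order all_algebra.
From mathcomp Require Import reals.
From mathcomp Require Import ring lra.
Set Implicit Arguments. Unset Strict Implicit. Unset Printing Implicit Defensive.
Import Order.TTheory GRing.Theory Num.Theory.
Local Open Scope ring_scope.

(* With D := Abar - A and F_t := f(x_t), the objective is the cost
   sum_t ||D F_t + d_t||, and Abar is a minimiser iff D = 0 minimises it.
   A summand with d_t <> 0 lies above its tangent ||d_t|| + <dhat_t, D F_t>
   and, by concavity of the square root, below that tangent plus a term
   quadratic in D; the linear terms add up to tr (D G) with
   G = sum_K F_t dhat_t^T.  A summand with d_t = 0 is ||D F_t||, at most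
   ||D||_F ||F_t||, with equality when m = 1.  Necessity: along D = -s G^T
   the cost changes by at most -s ||G||_F (||G||_F - S) + O(s^2), where
   S = sum_{K^c} ||F_t||.  Sufficiency: tr (D G) >= -||D||_F ||G||_F by
   Cauchy-Schwarz, which dominates -||D||_F S. *)

Lemma cauchy_schwarz_sqr {R : realFieldType} (I : finType) (a b : I -> R) :
  (\sum_i a i * b i) ^+ 2 <= (\sum_i a i ^+ 2) * (\sum_i b i ^+ 2).
Proof.
set A := \sum_i a i ^+ 2; set B := \sum_i b i ^+ 2; set C := \sum_i a i * b i.
have A_ge0 : 0 <= A by apply: sumr_ge0 => i _; exact: sqr_ge0.
have [A0 | A_neq0] := eqVneq A 0.
  have a0 i : a i = 0.
    apply/eqP; rewrite -sqrf_eq0; apply/eqP.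
    by apply: (psumr_eq0P _ A0) => // j _; exact: sqr_ge0.
  by rewrite /C big1 ?expr0n ?A0 ?mul0r // => i _; rewrite a0 mul0r.
have : 0 <= A * (A * B - C ^+ 2).
  have -> : A * (A * B - C ^+ 2) = \sum_i (A * b i - C * a i) ^+ 2.
    rewrite (eq_bigr (fun i =>
      A ^+ 2 * b i ^+ 2 - (2 * A * C) * (a i * b i) + C ^+ 2 * a i ^+ 2)); last by move=> i _; ring.
    by rewrite big_split sumrB /= -!mulr_sumr -/A -/B -/C; ring.
  by apply: sumr_ge0 => i _; exact: sqr_ge0.
by rewrite pmulr_rge0 ?subr_ge0 // lt_def A_neq0.
Qed.

Lemma cauchy_schwarz {R : rcfType} (I : finType) (a b : I -> R) :
  \sum_i a i * b i <= Num.sqrt (\sum_i a i ^+ 2) * Num.sqrt (\sum_i b i ^+ 2).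
Proof.
rewrite -sqrtrM; last by apply: sumr_ge0 => i _; exact: sqr_ge0.
apply: le_trans (ler_norm _) _; rewrite -sqrtr_sqr.
exact/ler_wsqrtr/cauchy_schwarz_sqr.
Qed.

Lemma sqrtr_le_tangent {R : rcfType} (c y : R) : 0 < c -> 0 <= y ->
  Num.sqrt y <= (y + c ^+ 2) / (2 * c).
Proof.
move=> c_gt0 y_ge0; rewrite ler_pdivlMr ?mulr_gt0 //.
rewrite -{2}(sqr_sqrtr y_ge0); have := sqr_ge0 (Num.sqrt y - c); nra.
Qed.

Lemma le0_of_le_pscale {R : realFieldType} (a C : R) :
  (forall s, 0 < s -> a <= s * C) -> a <= 0.
Proof.
move=> le_aC; apply/ler_addgt0Pr => e e_gt0; rewrite add0r.
have s_gt0 : 0 < e / (`|C| + 1) by rewrite divr_gt0 // ltr_wpDl.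
apply: le_trans (le_aC _ s_gt0) _; apply: le_trans (ler_wpM2l (ltW s_gt0) (ler_norm C)) _.
rewrite mulrAC ler_pdivrMr ?ltr_wpDl //; nra.
Qed.

Section Norms.
Variable R : realType.
Implicit Types (k p q : nat).

Lemma sum_sqr_ge0 (I : finType) (a : I -> R) : 0 <= \sum_i a i ^+ 2.
Proof. by apply: sumr_ge0 => i _; exact: sqr_ge0. Qed.

Lemma norm2_ge0 {k} (v : 'cV[R]_k) : 0 <= norm2 v.
Proof. exact: sqrtr_ge0. Qed.

Lemma sqr_norm2 {k} (v : 'cV[R]_k) : norm2 v ^+ 2 = \sum_i v i 0 ^+ 2.
Proof. by rewrite sqr_sqrtr ?sum_sqr_ge0. Qed.

Lemma norm20 k : norm2 (0 : 'cV[R]_k) = 0.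
Proof. by rewrite /norm2 big1 ?sqrtr0 // => i _; rewrite mxE expr0n. Qed.

Lemma norm2_gt0 {k} {v : 'cV[R]_k} : v != 0 -> 0 < norm2 v.
Proof.
move=> v_neq0; rewrite lt_def norm2_ge0 andbT; apply: contra v_neq0 => /eqP v0.
have sum0 : \sum_i v i 0 ^+ 2 = 0 by rewrite -sqr_norm2 v0 expr0n.
apply/eqP/matrixP => i j; rewrite ord1 mxE; apply/eqP; rewrite -sqrf_eq0.
by apply/eqP/(psumr_eq0P _ sum0) => // l _; exact: sqr_ge0.
Qed.

Lemma norm2Z {k} s (v : 'cV[R]_k) : 0 <= s -> norm2 (s *: v) = s * norm2 v.
Proof.
move=> s_ge0; rewrite -[s in RHS]ger0_norm // -sqrtr_sqr -sqrtrM ?sqr_ge0 //.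
by rewrite mulr_sumr; congr Num.sqrt; apply: eq_bigr => i _; rewrite mxE exprMn.
Qed.

Lemma frob_ge0 {p q} (M : 'M[R]_(p, q)) : 0 <= frob M.
Proof. exact: sqrtr_ge0. Qed.

Lemma frobN {p q} (M : 'M[R]_(p, q)) : frob (- M) = frob M.
Proof.
by congr Num.sqrt; apply: eq_bigr => i _; apply: eq_bigr => j _; rewrite mxE sqrrN.
Qed.

Lemma frob_trmx {p q} (M : 'M[R]_(p, q)) : frob M^T = frob M.
Proof.
rewrite /frob exchange_big /=; congr Num.sqrt.
by apply: eq_bigr => i _; apply: eq_bigr => j _; rewrite mxE.
Qed.

Lemma sqr_frob_mxtrace {p q} (M : 'M[R]_(p, q)) : frob M ^+ 2 = \tr (M *m M^T).
Proof.
rewrite sqr_sqrtr; last by apply: sumr_ge0 => i _; exact: sum_sqr_ge0.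
by apply: eq_bigr => i _; rewrite mxE; apply: eq_bigr => j _; rewrite mxE.
Qed.

Lemma mxtrace_mulmx_le {p q} (M : 'M[R]_(p, q)) (N : 'M[R]_(q, p)) :
  \tr (M *m N) <= frob M * frob N.
Proof.
have pair_sum (X : 'I_p -> 'I_q -> R) :
    \sum_i \sum_j X i j = \sum_(ij : 'I_p * 'I_q) X ij.1 ij.2.
  exact: pair_big.
have -> : \tr (M *m N) = \sum_i \sum_j M i j * N^T i j.
  by apply: eq_bigr => i _; rewrite mxE; apply: eq_bigr => j _; rewrite mxE.
rewrite -(frob_trmx N) /frob !pair_sum; exact: cauchy_schwarz.
Qed.

Lemma norm2_mulmx_le {p q} (M : 'M[R]_(p, q)) (v : 'cV[R]_q) :
  norm2 (M *m v) <= frob M * norm2 v.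
Proof.
rewrite -sqrtrM; last by apply: sumr_ge0 => i _; exact: sum_sqr_ge0.
apply: ler_wsqrtr; rewrite mulr_suml; apply: ler_sum => i _; rewrite mxE.
exact: cauchy_schwarz_sqr.
Qed.

Lemma norm2_mulmx1 {p} (M : 'M[R]_(p, 1)) (v : 'cV[R]_1) :
  norm2 (M *m v) = frob M * norm2 v.
Proof.
rewrite -sqrtrM; last by apply: sumr_ge0 => i _; exact: sum_sqr_ge0.
congr Num.sqrt; rewrite big_ord1 mulr_suml; apply: eq_bigr => i _.
by rewrite !big_ord1 mxE big_ord1 exprMn.
Qed.

Definition vdot {k} (u v : 'cV[R]_k) := \sum_i u i 0 * v i 0.

Definition normalized {k} (u : 'cV[R]_k) := (norm2 u)^-1 *: u.

Lemma vdot_normalized {k} (u v : 'cV[R]_k) :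
  vdot (normalized u) v = (norm2 u)^-1 * vdot u v.
Proof. by rewrite mulr_sumr; apply: eq_bigr => i _; rewrite mxE mulrA. Qed.

Lemma vdot_mulmx {k l} (u : 'cV[R]_k) (M : 'M[R]_(k, l)) (v : 'cV[R]_l) :
  vdot u (M *m v) = \tr (M *m (v *m u^T)).
Proof.
apply: eq_bigr => i _; rewrite !mxE mulr_sumr.
by apply: eq_bigr => j _; rewrite !mxE big_ord1 !mxE; ring.
Qed.

Lemma norm2_addl_ge {k} (w d : 'cV[R]_k) : d != 0 ->
  norm2 d + vdot (normalized d) w <= norm2 (w + d).
Proof.
move=> d_neq0; have d_gt0 := norm2_gt0 d_neq0; rewrite vdot_normalized.
have expand : vdot d (w + d) = vdot d w + norm2 d ^+ 2.
  by rewrite sqr_norm2 -big_split /=; apply: eq_bigr => i _; rewrite mxE; ring.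
have cs : vdot d (w + d) <= norm2 d * norm2 (w + d) by exact: cauchy_schwarz.
rewrite expand in cs.
rewrite -(ler_pM2l d_gt0) mulrDr mulrA mulfV ?gt_eqF // mul1r; lra.
Qed.

Lemma norm2_scaleD_le {k} s (w d : 'cV[R]_k) : d != 0 ->
  norm2 (s *: w + d) <= norm2 d + s * vdot (normalized d) w
                        + s ^+ 2 * (norm2 w ^+ 2 / (2 * norm2 d)).
Proof.
move=> d_neq0; have d_gt0 := norm2_gt0 d_neq0.
have expand : norm2 (s *: w + d) ^+ 2
    = norm2 d ^+ 2 + 2 * s * vdot d w + s ^+ 2 * norm2 w ^+ 2.
  rewrite !sqr_norm2 /vdot !mulr_sumr -!big_split /=.
  by apply: eq_bigr => i _; rewrite !mxE; ring.
rewrite -[norm2 (_ + _)]ger0_norm ?norm2_ge0 // -sqrtr_sqr.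
apply: le_trans (sqrtr_le_tangent d_gt0 (sqr_ge0 _)) _.
by rewrite expand vdot_normalized le_eqVlt; apply/orP; left; apply/eqP; field;
  rewrite gt_eqF.
Qed.

End Norms.

Section LeastAbsoluteDeviations.
Variables (R : realType) (n m T : nat).
Variables (F : nat -> 'cV[R]_m) (d : nat -> 'cV[R]_n).

Definition lad_cost (D : 'M[R]_(n, m)) := \sum_(t < T) norm2 (D *m F t + d t).

Definition lad_subgrad := \sum_(t < T | d t != 0) F t *m (normalized (d t))^T.

Definition lad_slack := \sum_(t < T | d t == 0) norm2 (F t).

Lemma lad_slack_ge0 : 0 <= lad_slack.
Proof. by apply: sumr_ge0 => t _; exact: norm2_ge0. Qed.

Lemma lad_cost_split D : lad_cost D =
  \sum_(t < T | d t != 0) norm2 (D *m F t + d t)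
  + \sum_(t < T | d t == 0) norm2 (D *m F t).
Proof.
rewrite /lad_cost (bigID (fun t : 'I_T => d t != 0)) /=; congr (_ + _).
by apply: eq_big => [t | t /negPn/eqP ->]; rewrite ?negbK ?addr0.
Qed.

Lemma lad_cost0 : lad_cost 0 = \sum_(t < T | d t != 0) norm2 (d t).
Proof.
rewrite lad_cost_split [X in _ + X]big1 => [|t _]; last by rewrite mul0mx norm20.
by rewrite addr0; apply: eq_bigr => t _; rewrite mul0mx add0r.
Qed.

Lemma sum_vdot_lad_subgrad D :
  \sum_(t < T | d t != 0) vdot (normalized (d t)) (D *m F t)
  = \tr (D *m lad_subgrad).
Proof.
rewrite /lad_subgrad mulmx_sumr raddf_sum; apply: eq_bigr => t _.
exact: vdot_mulmx.
Qed.

Lemma lad_cost_ge D :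
  lad_cost 0 + \tr (D *m lad_subgrad) + \sum_(t < T | d t == 0) norm2 (D *m F t)
  <= lad_cost D.
Proof.
rewrite lad_cost0 lad_cost_split lerD2r -sum_vdot_lad_subgrad -big_split /=.
by apply: ler_sum => t; exact: norm2_addl_ge.
Qed.

Lemma lad_cost_scale_le D s : 0 <= s ->
  lad_cost (s *: D) <= lad_cost 0
    + s * (\tr (D *m lad_subgrad) + frob D * lad_slack)
    + s ^+ 2 * \sum_(t < T | d t != 0) norm2 (D *m F t) ^+ 2 / (2 * norm2 (d t)).
Proof.
move=> s_ge0; rewrite lad_cost0 lad_cost_split -sum_vdot_lad_subgrad.
have le_K : \sum_(t < T | d t != 0) norm2 (s *: D *m F t + d t)
    <= \sum_(t < T | d t != 0) norm2 (d t)
       + s * \sum_(t < T | d t != 0) vdot (normalized (d t)) (D *m F t)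
       + s ^+ 2 * \sum_(t < T | d t != 0) norm2 (D *m F t) ^+ 2 / (2 * norm2 (d t)).
  rewrite !mulr_sumr -!big_split /=; apply: ler_sum => t dt.
  by rewrite -scalemxAl; exact: norm2_scaleD_le.
have le_Kc : \sum_(t < T | d t == 0) norm2 (s *: D *m F t) <= s * (frob D * lad_slack).
  rewrite /lad_slack !mulr_sumr; apply: ler_sum => t _.
  by rewrite -scalemxAl norm2Z // ler_wpM2l // norm2_mulmx_le.
lra.
Qed.

Lemma lad_min_subgrad_le :
  (forall D, lad_cost 0 <= lad_cost D) -> frob lad_subgrad <= lad_slack.
Proof.
move=> lad_min; set G := lad_subgrad; set D := - G^T.
have trDG : \tr (D *m G) = - frob G ^+ 2.
  by rewrite mulNmx raddfN /= mxtrace_mulC sqr_frob_mxtrace.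
have frobD : frob D = frob G by rewrite frobN frob_trmx.
have le0 : frob G * (frob G - lad_slack) <= 0.
  set C := \sum_(t < T | d t != 0) norm2 (D *m F t) ^+ 2 / (2 * norm2 (d t)).
  apply: (@le0_of_le_pscale _ _ C) => s s_gt0.
  have := le_trans (lad_min (s *: D)) (lad_cost_scale_le D (ltW s_gt0)).
  rewrite trDG frobD -/C; set a := - frob G ^+ 2 + _ => le_cost.
  have -> : frob G * (frob G - lad_slack) = - a by rewrite /a; ring.
  rewrite -(ler_pM2l s_gt0) mulrN mulrA -expr2; lra.
rewrite leNgt; apply/negP => lt_SG.
have G_gt0 : 0 < frob G := le_lt_trans lad_slack_ge0 lt_SG.
by rewrite pmulr_rle0 // subr_le0 leNgt lt_SG in le0.
Qed.

End LeastAbsoluteDeviations.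

Lemma lad_subgrad_le_min (R : realType) n T (F : nat -> 'cV[R]_1) (d : nat -> 'cV[R]_n) :
  frob (lad_subgrad T F d) <= lad_slack T F d ->
  forall D, lad_cost T F d 0 <= lad_cost T F d D.
Proof.
move=> le_GS D; apply: le_trans (lad_cost_ge T F d D).
have -> : \sum_(t < T | d t == 0) norm2 (D *m F t) = frob D * lad_slack T F d.
  by rewrite mulr_sumr; apply: eq_bigr => t _; exact: norm2_mulmx1.
have := mxtrace_mulmx_le (- D) (lad_subgrad T F d).
rewrite frobN mulNmx raddfN /=.
have := ler_wpM2l (frob_ge0 D) le_GS; lra.
Qed.

Theorem corollary2 (R : realType) (n m T : nat) (f : 'cV[R]_n -> 'cV[R]_m)
  (Abar : 'M[R]_(n, m)) (d : nat -> 'cV[R]_n) :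
  (is_global_minimizer T f Abar d -> opt_condition T f Abar d) /\
  (m = 1%N -> opt_condition T f Abar d -> is_global_minimizer T f Abar d).
Proof.
pose F t := f (traj f Abar d t).
have objectiveE A : objective T f Abar d A = lad_cost T F d (Abar - A) by [].
have minimizerE : is_global_minimizer T f Abar d <->
    forall D, lad_cost T F d 0 <= lad_cost T F d D.
  split => [min_Abar D | min0 A]; last by rewrite !objectiveE subrr.
  by have := min_Abar (Abar - D); rewrite !objectiveE subrr opprB addrC subrK.
split => [/minimizerE | m1]; first exact: lad_min_subgrad_le.
by subst m => /(@lad_subgrad_le_min _ _ T F d) /minimizerE.
Qed.
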